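(* Let $(\mathcal{C},P)$ be a primary doctrine with comprehension and negation. Then: (i) $(\mathcal{C},P)$ has co-comprehension, given by $\lceil\alpha\rceil:=\lfloor\neg\alpha\rfloor:\{\neg\alpha\}\to A$; (ii) if $(\mathcal{C},P)$ is a restricted $\Sigma(\mathcal{C}_P)$-doctrine, then it is also a restricted $\Sigma(\mathcal{C}_P^o)$-doctrine; (iii) if $(\mathcal{C},P)$ has full comprehension, then $(\mathcal{C},P)$ has full co-comprehension if and only if it is classical.
   Context: A doctrine is a pair $(\mathcal{C},P)$, $\mathcal{C}$ a category with finite products, $P:\mathcal{C}^{op}\to\mathbf{Pos}$ a functor, $f^*=P(f)$; primary means each $P(A)$ has binary meets preserved by each $f^*$. It has negation if each $P(A)$ has a bottom $\bot_A$ and an operation $\neg:P(A)\to P(A)$ with $\alpha\le\neg\beta$ iff $\alpha\wedge\beta=\bot_A$; reindexing maps are understood to preserve top, bottom and negation ($f^*\neg\alpha=\neg f^*\alpha$). It is classical if moreover $\neg\neg\alpha=\alpha$. Comprehension: every $P(A)$ has a top $\top_A$ and for each $\alpha\in P(A)$ there is $\lfloor\alpha\rfloor:\{\alpha\}\to A$ with $\lfloor\alpha\rfloor^*\alpha=\top$ such that every $f:Y\to A$ with $f^*\alpha=\top_Y$ factors uniquely through $\lfloor\alpha\rfloor$; full if whenever $\lfloor\alpha\rfloor$ factors through $\lfloor\beta\rfloor$ then $\alpha\le\beta$. Co-comprehension: every $P(A)$ has a bottom $\bot_A$ and for each $\alpha\in P(A)$ there is $\lceil\alpha\rceil:\{\alpha\}^o\to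 A$ with $\lceil\alpha\rceil^*\alpha=\bot$ such that every $f:Y\to A$ with $f^*\alpha=\bot_Y$ factors uniquely as $f=\lceil\alpha\rceil k$; these arrows are monic and $\alpha\le\beta$ implies $\lceil\beta\rceil$ factors through $\lceil\alpha\rceil$; co-comprehension is full if conversely whenever $\lceil\beta\rceil$ factors through $\lceil\alpha\rceil$ then $\alpha\le\beta$. $\mathcal{C}_P$ (resp. $\mathcal{C}_P^o$) is the pullback-stable class of arrows of the form $\lfloor\alpha\rfloor$ (resp. $\lceil\alpha\rceil$). For a pullback-stable class $\mathcal{A}$, a restricted $\Sigma(\mathcal{A})$-doctrine is one where each $f^*$ with $f:A\to B$ in $\mathcal{A}$ has a left adjoint $\Sigma_f$ (i.e. $\alpha\le f^*\Sigma_f\alpha$, $\Sigma_ff^*\beta\le\beta$) and for every pullback square $h\circ g=f\circ k$ and every $\xi\in P(B)$, $h^*\Sigma_ff^*\xi=\Sigma_gk^*f^*\xi$. *)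

Set Implicit Arguments.
Unset Strict Implicit.

Record Category := {
  Ob : Type;
  Hom : Ob -> Ob -> Type;
  idm : forall A, Hom A A;
  comp : forall A B D, Hom B D -> Hom A B -> Hom A D;
  comp_id_l : forall A B (f : Hom A B), comp (idm B) f = f;
  comp_id_r : forall A B (f : Hom A B), comp f (idm A) = f;
  comp_assoc : forall A B D E (f : Hom A B) (g : Hom B D) (h : Hom D E),
      comp h (comp g f) = comp (comp h g) f
}.
Arguments Hom : clear implicits.
Arguments idm {c} A.
Arguments comp {c A B D} _ _.

Definition is_terminal (C : Category) (T : Ob C) : Prop :=
  forall X : Ob C, exists f : Hom C X T, forall g : Hom C X T, g = f.

Definition is_product (C : Category) (A B P : Ob C)
  (p1 : Hom C P A) (p2 : Hom C P B) : Prop :=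
  forall (X : Ob C) (f : Hom C X A) (g : Hom C X B),
    exists! h : Hom C X P, comp p1 h = f /\ comp p2 h = g.

Definition has_finite_products (C : Category) : Prop :=
  (exists T : Ob C, is_terminal T) /\
  (forall A B : Ob C, exists (P : Ob C) (p1 : Hom C P A) (p2 : Hom C P B),
      is_product p1 p2).

Definition is_iso (C : Category) (X Y : Ob C) (h : Hom C X Y) : Prop :=
  exists h' : Hom C Y X, comp h' h = idm X /\ comp h h' = idm Y.

Definition is_monic (C : Category) (X A : Ob C) (m : Hom C X A) : Prop :=
  forall (Z : Ob C) (u v : Hom C Z X), comp m u = comp m v -> u = v.

Definition is_pullback (C : Category) (A B A' B' : Ob C)
  (f : Hom C A B) (k : Hom C A' A) (g : Hom C A' B') (h : Hom C B' B) : Prop :=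
  comp h g = comp f k /\
  forall (Z : Ob C) (u : Hom C Z B') (v : Hom C Z A),
    comp h u = comp f v ->
    exists! w : Hom C Z A', comp g w = u /\ comp k w = v.

Record Doctrine (C : Category) := {
  Pr : Ob C -> Type;
  le : forall A, Pr A -> Pr A -> Prop;
  le_refl : forall A (a : Pr A), le a a;
  le_trans : forall A (a b c : Pr A), le a b -> le b c -> le a c;
  le_antisym : forall A (a b : Pr A), le a b -> le b a -> a = b;
  reindex : forall A B, Hom C A B -> Pr B -> Pr A;
  reindex_mono : forall A B (f : Hom C A B) (a b : Pr B),
      le a b -> le (reindex f a) (reindex f b);
  reindex_id : forall A (a : Pr A), reindex (idm A) a = a;
  reindex_comp : forall A B D (f : Hom C A B) (g : Hom C B D) (a : Pr D),
      reindex (comp g f) a = reindex f (reindex g a)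
}.
Arguments Pr {C} d A.
Arguments le {C d A} _ _.
Arguments reindex {C d A B} _ _.

Unset Implicit Arguments.
Section DoctrineProps.
Context {C : Category}.
Variable D : Doctrine C.

Definition is_primary (meet : forall A, Pr D A -> Pr D A -> Pr D A) : Prop :=
  (forall A (a b : Pr D A), le (meet A a b) a /\ le (meet A a b) b) /\
  (forall A (a b c : Pr D A), le c a -> le c b -> le c (meet A a b)) /\
  (forall A B (f : Hom C A B) (a b : Pr D B),
      reindex f (meet B a b) = meet A (reindex f a) (reindex f b)).

Definition has_negation (meet : forall A, Pr D A -> Pr D A -> Pr D A)
  (bot : forall A, Pr D A) (neg : forall A, Pr D A -> Pr D A) : Prop :=
  (forall A (a : Pr D A), le (bot A) a) /\
  (forall A (a b : Pr D A), le a (neg A b) <-> meet A a b = bot A) /\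
  (forall A B (f : Hom C A B), reindex f (bot B) = bot A) /\
  (forall A B (f : Hom C A B) (a : Pr D B),
      reindex f (neg B a) = neg A (reindex f a)).

Definition is_classical (neg : forall A, Pr D A -> Pr D A) : Prop :=
  forall A (a : Pr D A), neg A (neg A a) = a.

(* comprehension: {a} and  floor a : {a} -> A *)
Definition has_comprehension (top : forall A, Pr D A)
  (cob : forall A, Pr D A -> Ob C)
  (carr : forall A (a : Pr D A), Hom C (cob A a) A) : Prop :=
  (forall A (a : Pr D A), le a (top A)) /\
  (forall A B (f : Hom C A B), reindex f (top B) = top A) /\
  (forall A (a : Pr D A), reindex (carr A a) a = top (cob A a)) /\
  (forall A (a : Pr D A) (Y : Ob C) (f : Hom C Y A),
      reindex f a = top Y ->
      exists! k : Hom C Y (cob A a), f = comp (carr A a) k).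

Definition full_comprehension (cob : forall A, Pr D A -> Ob C)
  (carr : forall A (a : Pr D A), Hom C (cob A a) A) : Prop :=
  forall A (a b : Pr D A),
    (exists k : Hom C (cob A a) (cob A b), carr A a = comp (carr A b) k) ->
    le a b.

(* co-comprehension: {a}^o and  ceil a : {a}^o -> A *)
Definition has_cocomprehension (bot : forall A, Pr D A)
  (cob : forall A, Pr D A -> Ob C)
  (carr : forall A (a : Pr D A), Hom C (cob A a) A) : Prop :=
  (forall A (a : Pr D A), le (bot A) a) /\
  (forall A (a : Pr D A), reindex (carr A a) a = bot (cob A a)) /\
  (forall A (a : Pr D A) (Y : Ob C) (f : Hom C Y A),
      reindex f a = bot Y ->
      exists! k : Hom C Y (cob A a), f = comp (carr A a) k) /\
  (forall A (a : Pr D A), is_monic (carr A a)) /\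
  (forall A (a b : Pr D A), le a b ->
      exists k : Hom C (cob A b) (cob A a), carr A b = comp (carr A a) k).

Definition full_cocomprehension (cob : forall A, Pr D A -> Ob C)
  (carr : forall A (a : Pr D A), Hom C (cob A a) A) : Prop :=
  forall A (a b : Pr D A),
    (exists k : Hom C (cob A b) (cob A a), carr A b = comp (carr A a) k) ->
    le a b.

(* the class of arrows of the form carr A a (up to isomorphism of domains,
   which makes it pullback-stable) *)
Definition arrow_class (cob : forall A, Pr D A -> Ob C)
  (carr : forall A (a : Pr D A), Hom C (cob A a) A)
  (X A : Ob C) (m : Hom C X A) : Prop :=
  exists (a : Pr D A) (i : Hom C X (cob A a)), is_iso i /\ m = comp (carr A a) i.

(* restricted Sigma(cls)-doctrine; Sigma is a total operation whose
   properties are only required on arrows of the class *)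
Definition restricted_Sigma
  (cls : forall X A : Ob C, Hom C X A -> Prop)
  (Sigma : forall A B, Hom C A B -> Pr D A -> Pr D B) : Prop :=
  (forall A B (f : Hom C A B), cls A B f ->
     (forall a : Pr D A, le a (reindex f (Sigma A B f a))) /\
     (forall b : Pr D B, le (Sigma A B f (reindex f b)) b)) /\
  (forall A B A' B' (f : Hom C A B) (k : Hom C A' A) (g : Hom C A' B')
          (h : Hom C B' B),
     cls A B f -> is_pullback f k g h ->
     forall xi : Pr D B,
       reindex h (Sigma A B f (reindex f xi)) =
       Sigma A' B' g (reindex k (reindex f xi))).

End DoctrineProps.

(* Under comprehension, the arrow [floor (neg a)] classifies exactly the arrows along which
   [a] becomes [bot]: [f^* a = bot] iff [f^* (neg a) = top], since reindexing preserves
   negation and [neg x = top] forces [x = bot].  So [floor (neg a)] is a co-comprehension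
   of [a], and its arrows are comprehension arrows, whence (ii).  For (iii): the
   co-comprehension arrow of [a] always factors through that of [neg (neg a)], because
   [neg (neg bot) = bot]; fullness then gives [neg (neg a) <= a].  Conversely, in a
   classical doctrine fullness of comprehension transfers to [floor (neg _)] by
   contraposition. *)

Section RestrictedSigma.
Context {C : Category} {D : Doctrine C}.

Lemma restricted_Sigma_sub {cls cls' : forall X A : Ob C, Hom C X A -> Prop}
  {Sigma : forall A B, Hom C A B -> Pr D A -> Pr D B} :
  (forall X A (m : Hom C X A), cls' X A m -> cls X A m) ->
  restricted_Sigma D cls Sigma -> restricted_Sigma D cls' Sigma.
Proof.
  intros Hsub [Hadj Hbc]. split.
  - intros A B f Hf. exact (Hadj A B f (Hsub _ _ _ Hf)).
  - intros A B A' B' f k g h Hf. exact (Hbc A B A' B' f k g h (Hsub _ _ _ Hf)).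
Qed.

End RestrictedSigma.

Section Negation.
Context {C : Category} {D : Doctrine C}.
Context {meet : forall A, Pr D A -> Pr D A -> Pr D A}.
Context {top bot : forall A, Pr D A}.
Context {neg : forall A, Pr D A -> Pr D A}.
Hypothesis Hprim : is_primary D meet.
Hypothesis Hneg : has_negation D meet bot neg.
Hypothesis le_top : forall A (a : Pr D A), le a (top A).

Lemma meet_lel A (a b : Pr D A) : le (meet A a b) a.
Proof. exact (proj1 (proj1 Hprim A a b)). Qed.

Lemma meet_ler A (a b : Pr D A) : le (meet A a b) b.
Proof. exact (proj2 (proj1 Hprim A a b)). Qed.

Lemma le_meet A (a b c : Pr D A) : le c a -> le c b -> le c (meet A a b).
Proof. exact (proj1 (proj2 Hprim) A a b c). Qed.

Lemma le_bot A (a : Pr D A) : le (bot A) a.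
Proof. exact (proj1 Hneg A a). Qed.

Lemma le_neg A (a b : Pr D A) : le a (neg A b) <-> meet A a b = bot A.
Proof. exact (proj1 (proj2 Hneg) A a b). Qed.

Lemma reindex_neg A B (f : Hom C A B) (a : Pr D B) :
  reindex f (neg B a) = neg A (reindex f a).
Proof. exact (proj2 (proj2 (proj2 Hneg)) A B f a). Qed.

Lemma meet_comm A (a b : Pr D A) : meet A a b = meet A b a.
Proof.
  apply le_antisym; apply le_meet; (apply meet_lel || apply meet_ler).
Qed.

Lemma meet_top_l A (a : Pr D A) : meet A (top A) a = a.
Proof.
  apply le_antisym; [apply meet_ler | apply le_meet; [apply le_top | apply le_refl]].
Qed.

Lemma neg_bot A : neg A (bot A) = top A.
Proof.
  apply le_antisym; [apply le_top |].
  apply le_neg, le_antisym; [apply meet_ler | apply le_bot].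
Qed.

Lemma neg_top A : neg A (top A) = bot A.
Proof. rewrite <- (meet_top_l A (neg A (top A))), meet_comm. apply le_neg, le_refl. Qed.

Lemma neg_anti A (a b : Pr D A) : le a b -> le (neg A b) (neg A a).
Proof.
  intros Hab. apply le_neg, le_antisym; [| apply le_bot].
  rewrite <- (proj1 (le_neg A (meet A (neg A b) a) b) (meet_lel _ _ _)).
  apply le_meet; [apply le_refl | eapply le_trans; [apply meet_ler | exact Hab]].
Qed.

Lemma le_neg_neg A (a : Pr D A) : le a (neg A (neg A a)).
Proof. apply le_neg. rewrite meet_comm. apply le_neg, le_refl. Qed.

Lemma eq_bot_of_neg_eq_top A (a : Pr D A) : neg A a = top A -> a = bot A.
Proof.
  intros Ha. rewrite <- (meet_top_l A a), <- Ha. apply le_neg, le_refl.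
Qed.

Lemma classical_of_full_cocomprehension {cob : forall A, Pr D A -> Ob C}
  {carr : forall A (a : Pr D A), Hom C (cob A a) A} :
  has_cocomprehension D bot cob carr -> full_cocomprehension D cob carr ->
  is_classical D neg.
Proof.
  intros [_ [Hcarr [Hfactor _]]] Hfull A a.
  apply le_antisym; [| apply le_neg_neg].
  apply Hfull.
  destruct (Hfactor A (neg A (neg A a)) _ (carr A a)) as [k [Hk _]].
  { rewrite !reindex_neg, Hcarr, neg_bot. apply neg_top. }
  exists k. exact Hk.
Qed.

End Negation.

Section Comprehension.
Context {C : Category} {D : Doctrine C}.
Context {meet : forall A, Pr D A -> Pr D A -> Pr D A}.
Context {top bot : forall A, Pr D A}.
Context {neg : forall A, Pr D A -> Pr D A}.
Context {cob : forall A, Pr D A -> Ob C}.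
Context {carr : forall A (a : Pr D A), Hom C (cob A a) A}.
Hypothesis Hprim : is_primary D meet.
Hypothesis Hneg : has_negation D meet bot neg.
Hypothesis Hcomp : has_comprehension D top cob carr.

Let le_top : forall A (a : Pr D A), le a (top A) := proj1 Hcomp.

Lemma reindex_top A B (f : Hom C A B) : reindex f (top B) = top A.
Proof. exact (proj1 (proj2 Hcomp) A B f). Qed.

Lemma reindex_carr A (a : Pr D A) : reindex (carr A a) a = top (cob A a).
Proof. exact (proj1 (proj2 (proj2 Hcomp)) A a). Qed.

Lemma carr_factor A (a : Pr D A) Y (f : Hom C Y A) :
  reindex f a = top Y -> exists! k : Hom C Y (cob A a), f = comp (carr A a) k.
Proof. exact (proj2 (proj2 (proj2 Hcomp)) A a Y f). Qed.

Lemma carr_monic A (a : Pr D A) : is_monic (carr A a).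
Proof.
  intros Z u v Huv.
  assert (Hu : reindex (comp (carr A a) u) a = top Z).
  { rewrite reindex_comp, reindex_carr. apply reindex_top. }
  destruct (carr_factor _ _ _ _ Hu) as [k [_ Hk]].
  rewrite <- (Hk u eq_refl). apply Hk. exact Huv.
Qed.

Lemma carr_factor_of_le A (a b : Pr D A) :
  le a b -> exists k : Hom C (cob A a) (cob A b), carr A a = comp (carr A b) k.
Proof.
  intros Hab.
  assert (Hb : reindex (carr A a) b = top _).
  { apply le_antisym; [apply le_top |].
    rewrite <- (reindex_carr _ a). apply reindex_mono, Hab. }
  destruct (carr_factor _ _ _ _ Hb) as [k [Hk _]]. exists k. exact Hk.
Qed.

Lemma reindex_carr_neg A (a : Pr D A) : reindex (carr A (neg A a)) a = bot _.
Proof.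
  apply (eq_bot_of_neg_eq_top Hprim Hneg le_top).
  rewrite <- (reindex_neg Hneg). apply reindex_carr.
Qed.

Lemma cocomprehension_carr_neg :
  has_cocomprehension D bot (fun A a => cob A (neg A a)) (fun A a => carr A (neg A a)).
Proof.
  split; [exact (le_bot Hneg) |]. split; [exact reindex_carr_neg |]. split.
  - intros A a Y f Hf. apply carr_factor.
    rewrite (reindex_neg Hneg), Hf. apply (neg_bot Hprim Hneg le_top).
  - split; [intros A a; apply carr_monic |].
    intros A a b Hab. apply carr_factor_of_le, (neg_anti Hprim Hneg), Hab.
Qed.

Lemma arrow_class_carr_neg X A (m : Hom C X A) :
  arrow_class D (fun A a => cob A (neg A a)) (fun A a => carr A (neg A a)) X A m ->
  arrow_class D cob carr X A m.
Proof. intros [a [i Hi]]. exists (neg A a), i. exact Hi. Qed.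

Lemma full_cocomprehension_carr_neg :
  full_comprehension D cob carr -> is_classical D neg ->
  full_cocomprehension D (fun A a => cob A (neg A a)) (fun A a => carr A (neg A a)).
Proof.
  intros Hfull Hcl A a b Hba.
  rewrite <- (Hcl A a), <- (Hcl A b).
  apply (neg_anti Hprim Hneg), Hfull, Hba.
Qed.

End Comprehension.

Theorem mainTheorem4
  (C : Category) (HC : has_finite_products C) (D : Doctrine C)
  (meet : forall A, Pr D A -> Pr D A -> Pr D A)
  (top bot : forall A, Pr D A)
  (neg : forall A, Pr D A -> Pr D A)
  (cob : forall A, Pr D A -> Ob C)
  (carr : forall A (a : Pr D A), Hom C (cob A a) A)
  (Hprim : is_primary D meet)
  (Hneg : has_negation D meet bot neg)
  (Hcomp : has_comprehension D top cob carr) :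
  (* (i) *)
  has_cocomprehension D bot (fun A a => cob A (neg A a))
                            (fun A a => carr A (neg A a))
  (* (ii) *)
  /\ (forall Sigma : forall A B, Hom C A B -> Pr D A -> Pr D B,
        restricted_Sigma D (arrow_class D cob carr) Sigma ->
        exists Sigma' : forall A B, Hom C A B -> Pr D A -> Pr D B,
          restricted_Sigma D
            (arrow_class D (fun A a => cob A (neg A a))
                           (fun A a => carr A (neg A a))) Sigma')
  (* (iii) *)
  /\ (full_comprehension D cob carr ->
        ((exists (cob' : forall A, Pr D A -> Ob C)
                 (carr' : forall A (a : Pr D A), Hom C (cob' A a) A),
             has_cocomprehension D bot cob' carr' /\
             full_cocomprehension D cob' carr')
         <-> is_classical D neg)).
Proof.
  pose proof (cocomprehension_carr_neg Hprim Hneg Hcomp) as Hcocomp.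
  split; [exact Hcocomp |]. split.
  - intros Sigma HSigma. exists Sigma.
    apply (restricted_Sigma_sub (arrow_class_carr_neg (neg := neg))), HSigma.
  - intros Hfull. split.
    + intros [cob' [carr' [Hcocomp' Hfull']]].
      exact (classical_of_full_cocomprehension Hprim Hneg (proj1 Hcomp) Hcocomp' Hfull').
    + intros Hcl. exists (fun A a => cob A (neg A a)), (fun A a => carr A (neg A a)).
      split; [exact Hcocomp |].
      exact (full_cocomprehension_carr_neg Hprim Hneg Hfull Hcl).
Qed.
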